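(* Let $n\ge7$ and let $\mathcal{W}\subset(\mathbb{R}^{4n})^{\otimes5}$ be the set defined below, with $E=\{1,\dots,2n\}$ and $\mathcal{E}=\{2n+1,\dots,4n\}$. Then $\mathbb{I}(E,6)$ is the only decomposable tensor in $\mathbb{I}(E,6)\bmod\mathcal{W}_E$, and $\mathbb{I}(\mathcal{E},6)$ is the only decomposable tensor in $\mathbb{I}(\mathcal{E},6)\bmod\mathcal{W}_{\mathcal{E}}$.
   Context: All tensors are real; decomposable means of the form $v_1\otimes\cdots\otimes v_6$. $\mathbb{I}(E,6)\in(\mathbb{R}^E)^{\otimes6}$ is the all-ones tensor, similarly $\mathbb{I}(\mathcal{E},6)$. $\mathcal{W}_E$ (resp. $\mathcal{W}_{\mathcal{E}}$) is the set of restrictions of the tensors in $\mathcal{W}$ to indices in $E$ (resp. $\mathcal{E}$). For $\mathcal{C}\in(\mathbb{R}^I)^{\otimes d}$ and a finite $\mathcal{V}\subset(\mathbb{R}^I)^{\otimes(d-1)}$, $\mathcal{C}\bmod\mathcal{V}$ is the set of tensors with entries $\mathcal{C}(k_1|\dots|k_d)+\sum_{j=1}^dM_j^{(k_j)}(k_1|\dots|\widehat{k_j}|\dots|k_d)$ with arbitrary $M_j^{(k_j)}\in\operatorname{Span}\mathcal{V}$ chosen independently for each $j$ and each $k_j\in I$. The set $\mathcal{W}$: for $i\in\{1,\dots,n\}$ let $\alpha_i\in\mathbb{R}^{2n}$ have entries $1$ at positions $2i-1,2i$ and $0$ elsewhere; $(a|b)\in\mathbb{R}^{4n}$ is concatenation.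 With $1\le i_1<i_2<i_3<i_4\le n$ and $1\le k_1<k_2\le n$ ranging over all choices, let $U$ be the set of vectors of the 16 types: $(\alpha_{i_1}+\alpha_{i_2}+\alpha_{i_3}+\alpha_{i_4}|0)$, $(\alpha_{i_1}+\alpha_{i_2}+\alpha_{i_3}|0)$, $(\alpha_{i_1}+\alpha_{i_2}|0)$, $(\alpha_{i_1}|0)$, $(\alpha_{i_1}+\alpha_{i_2}+\alpha_{i_3}+\alpha_{i_4}|\alpha_{k_1})$, $(\alpha_{i_1}+\alpha_{i_2}|\tfrac{(n-2)^2}{(n-3)(n-1)}\alpha_{k_1})$, $(\alpha_{i_1}|\tfrac{n-2}{n-3}\alpha_{k_1})$, $(\alpha_{i_1}|\tfrac{n-1}{n-4}\alpha_{k_1})$, $(\alpha_{i_1}+\alpha_{i_2}+\alpha_{i_3}|\alpha_{k_1}+\alpha_{k_2})$, $(\alpha_{i_1}+\alpha_{i_2}|\tfrac{n-2}{n-3}(\alpha_{k_1}+\alpha_{k_2}))$, $(\alpha_{i_1}+\alpha_{i_2}|\tfrac{n-2}{n-4}\alpha_{k_1})$, $(0|\alpha_{k_1})$, $(\alpha_{i_1}+\alpha_{i_2}+\alpha_{i_3}|\tfrac{n-3}{n-4}\alpha_{k_1})$, $(\alpha_{i_1}+\alpha_{i_2}+\alpha_{i_3}|\tfrac{n-2}{n-1}\alpha_{k_1})$, $(\alpha_{i_1}|\tfrac{n-1}{n-3}(\alpha_{k_1}+\alpha_{k_2}))$, $(0|\alpha_{k_1}+\alpha_{k_2})$ (types with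 only $i_1$ or only $k_1$ omit the other indices; $k_1$ alone ranges over $\{1,\dots,n\}$). Let $\pi(a_1,\dots,a_{2n},b_1,\dots,b_{2n})=(b_2,\dots,b_{2n},b_1,a_2,\dots,a_{2n},a_1)$. Set $\mathcal{W}_1=\{u^{\otimes5}:u\in U\}$, $\mathcal{W}_2=\{(\pi u)^{\otimes5}:u\in U\}$, $\mathcal{W}=\mathcal{W}_1\cup\mathcal{W}_2$. *)

From HB Require Import structures.
From mathcomp Require Import all_boot all_order all_algebra.
From mathcomp Require Import reals.
Set Implicit Arguments. Unset Strict Implicit. Unset Printing Implicit Defensive.
Import Order.TTheory GRing.Theory Num.Theory.
Local Open Scope ring_scope.

Definition mtensor (R : realType) (d m : nat) := {ffun 'I_d -> 'I_m} -> R.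

Definition ones (R : realType) (d m : nat) : mtensor R d m := fun _ => 1.

Definition decomposable (R : realType) (d m : nat) (T : mtensor R d m) : Prop :=
  exists v : 'I_d -> 'I_m -> R, forall k, T k = \prod_(i < d) v i (k i).

Definition in_span (R : realType) (d m : nat) (P : mtensor R d m -> Prop)
  (M : mtensor R d m) : Prop :=
  exists (N : nat) (f : 'I_N -> mtensor R d m) (c : 'I_N -> R),
    (forall i, P (f i)) /\ forall k, M k = \sum_(i < N) c i * f i k.

(* T belongs to  C mod V : entries C(k) + sum_j M_j^{(k_j)}(k without k_j) *)
Definition mod_set (R : realType) (d m : nat) (C : mtensor R d.+1 m)
  (P : mtensor R d m -> Prop) (T : mtensor R d.+1 m) : Prop :=
  exists M : 'I_d.+1 -> 'I_m -> mtensor R d m,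
    (forall j x, in_span P (M j x)) /\
    forall k : {ffun 'I_d.+1 -> 'I_m},
      T k = C k + \sum_(j < d.+1) M j (k j) [ffun i : 'I_d => k (lift j i)].

(* Vectors of R^{4n} as functions nat -> R, 0-based positions 0..4n-1.
   alpha_i (i : 'I_n, 0-based) has ones at positions 2i, 2i+1 of R^{2n}.
   vecU S c K = (sum_{i in S} alpha_i | c * sum_{k in K} alpha_k). *)
Definition vecU (R : realType) (n : nat) (S : {set 'I_n}) (c : R) (K : {set 'I_n})
  : nat -> R := fun p =>
  if (p < 2 * n)%N then \sum_(i in S) (if (p./2 == i)%N then 1 else 0)
  else c * \sum_(k in K) (if ((p - 2 * n)./2 == k)%N then 1 else 0).

(* The 16 types: (|S|, |K|, coefficient of the second block). *)
Definition Utypes (R : realType) (n : nat) : seq (nat * nat * R) :=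
  let N := n%:R : R in
  [:: (4%N, 0%N, 1); (3%N, 0%N, 1); (2%N, 0%N, 1); (1%N, 0%N, 1);
      (4%N, 1%N, 1);
      (2%N, 1%N, (N - 2) ^+ 2 / ((N - 3) * (N - 1)));
      (1%N, 1%N, (N - 2) / (N - 3));
      (1%N, 1%N, (N - 1) / (N - 4));
      (3%N, 2%N, 1);
      (2%N, 2%N, (N - 2) / (N - 3));
      (2%N, 1%N, (N - 2) / (N - 4));
      (0%N, 1%N, 1);
      (3%N, 1%N, (N - 3) / (N - 4));
      (3%N, 1%N, (N - 2) / (N - 1));
      (1%N, 2%N, (N - 1) / (N - 3));
      (0%N, 2%N, 1)].

Definition inU (R : realType) (n : nat) (u : nat -> R) : Prop :=
  exists t, t \in Utypes R n /\
  exists S K : {set 'I_n}, #|S| = t.1.1 /\ #|K| = t.1.2 /\ u = vecU S t.2 K.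

(* pi(a_1..a_2n, b_1..b_2n) = (b_2,...,b_2n,b_1, a_2,...,a_2n,a_1), 0-based *)
Definition piv (R : realType) (n : nat) (u : nat -> R) : nat -> R := fun q =>
  if (q < 2 * n)%N then u (2 * n + (q.+1 %% (2 * n)))%N
  else u ((q - 2 * n).+1 %% (2 * n))%N.

Definition Wvec (R : realType) (n : nat) (w : nat -> R) : Prop :=
  exists u, inU n u /\ (w = u \/ w = piv n u).

(* W_E : restrictions to E = positions 0..2n-1 *)
Definition W_E (R : realType) (n : nat) (T : mtensor R 5 (2 * n)) : Prop :=
  exists w, Wvec n w /\ forall k, T k = \prod_(i < 5) w (k i).

(* W_calE : restrictions to calE = positions 2n..4n-1 (reindexed to 0..2n-1) *)
Definition W_calE (R : realType) (n : nat) (T : mtensor R 5 (2 * n)) : Prop :=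
  exists w, Wvec n w /\ forall k, T k = \prod_(i < 5) w (2 * n + k i)%N.

(** Label each position p of R^(2n) by the alpha-pair p/2 containing it and by
    the pair ((p+1) mod 2n)/2 of the cyclically shifted pairing that pi induces.
    On each block, every generator of W is supported on positions whose labels of
    one of the two kinds take at most four values, so by pigeonhole its fifth
    tensor power vanishes at every multi-index whose positions have pairwise
    distinct labels of both kinds ("admissible").  Hence a tensor in
    I(.,6) mod W equals 1 at every admissible multi-index.  If it is moreover
    v_1 (x) ... (x) v_6, fix all coordinates but the i-th at the even positions
    2m of five labels m outside {x, y} (possible as n >= 7): then v_i takes the
    same value at all positions whose labels lie in {x, y}.  Chaining such
    pairs shows that every v_i is constant, and evaluating at one admissible
    multi-index shows that the product of these constants is 1. *)
From HB Require Import structures.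
From mathcomp Require Import all_boot all_order all_algebra.
From mathcomp Require Import reals zify.
Set Implicit Arguments.
Unset Strict Implicit.
Unset Printing Implicit Defensive.
Import GRing.Theory.
Local Open Scope ring_scope.

Definition pair_index (p : nat) : nat := p./2.
Definition shifted_pair_index (n p : nat) : nat := (p.+1 %% (2 * n))./2.

Definition admissible (n : nat) {d : nat} (k : 'I_d -> 'I_(2 * n)) : Prop :=
  injective (fun i => pair_index (k i)) /\
  injective (fun i => shifted_pair_index n (k i)).

Definition supported_on {R : nmodType} {I : Type} (lab : I -> nat)
  (w : I -> R) (s : seq nat) : Prop :=
  forall x, w x != 0 -> lab x \in s.

Lemma prod_eq0_supported (R : comPzRingType) (I : Type) (d : nat)
    (lab : I -> nat) (w : I -> R) (s : seq nat) (k : 'I_d -> I) :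
  (size s < d)%N -> supported_on lab w s -> injective (fun i => lab (k i)) ->
  \prod_(i < d) w (k i) = 0.
Proof.
move=> small supp inj.
have [i lab_out] : exists i, lab (k i) \notin s.
  apply/existsP; apply: contraLR small => /existsPn all_in.
  rewrite -leqNgt -{1}(size_enum_ord d) -(size_map (fun i => lab (k i))).
  apply: uniq_leq_size; first by rewrite map_inj_uniq ?enum_uniq.
  by move=> _ /mapP [j _ ->]; move/negPn: (all_in j).
have w0 : w (k i) = 0 by apply/eqP; apply: (contraNT (supp _) lab_out).
by rewrite (bigD1 i) //= w0 mul0r.
Qed.

Definition sparse {R : nmodType} (n : nat) (w : 'I_(2 * n) -> R) : Prop :=
  exists2 s : seq nat, (size s <= 4)%N &
    supported_on (fun p : 'I_(2 * n) => pair_index p) w s \/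
    supported_on (fun p : 'I_(2 * n) => shifted_pair_index n p) w s.

Lemma sparse_prod_eq0 (R : comPzRingType) (n d : nat) (w : 'I_(2 * n) -> R)
    (k : 'I_d -> 'I_(2 * n)) :
  (4 < d)%N -> sparse w -> admissible k -> \prod_(i < d) w (k i) = 0.
Proof.
move=> d_gt4 [s small_s supp] [inj_pair inj_shift].
have size_lt : (size s < d)%N by apply: leq_ltn_trans d_gt4.
by case: supp => supp; apply: prod_eq0_supported supp _.
Qed.

Lemma sum_indicator_neq0 (R : pzSemiRingType) (n x : nat) (S : {set 'I_n}) :
  \sum_(i in S) (if (x == i)%N then 1 else 0 : R) != 0 -> x \in map val (enum S).
Proof.
apply: contraR => x_out; apply/eqP; rewrite big1 // => i iS.
case: (x =P i) => // x_i.
by move: x_out; rewrite x_i map_f ?mem_enum.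
Qed.

Definition vanishes_at_admissible (R : realType) (n d : nat)
  (P : mtensor R d (2 * n) -> Prop) : Prop :=
  forall S (k : {ffun 'I_d -> 'I_(2 * n)}), P S -> admissible k -> S k = 0.

Section Generators.
Variables (R : realType) (n : nat).

Lemma vecU_supported_E (S K : {set 'I_n}) (c : R) (p : nat) :
  (p < 2 * n)%N -> vecU S c K p != 0 -> pair_index p \in map val (enum S).
Proof. by move=> p_lt; rewrite /vecU p_lt; apply: sum_indicator_neq0. Qed.

Lemma vecU_supported_calE (S K : {set 'I_n}) (c : R) (p : nat) :
  vecU S c K (2 * n + p) != 0 -> pair_index p \in map val (enum K).
Proof.
rewrite /vecU ltnNge leq_addr addKn mulf_eq0 negb_or => /andP [_].
exact: sum_indicator_neq0.
Qed.

Lemma piv_E (u : nat -> R) (q : nat) :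
  (q < 2 * n)%N -> piv n u q = u (2 * n + q.+1 %% (2 * n))%N.
Proof. by rewrite /piv => ->. Qed.

Lemma piv_calE (u : nat -> R) (q : nat) :
  piv n u (2 * n + q) = u (q.+1 %% (2 * n))%N.
Proof. by rewrite /piv ltnNge leq_addr addKn. Qed.

Lemma Utypes_small t : t \in Utypes R n -> (t.1.1 <= 4)%N && (t.1.2 <= 4)%N.
Proof. by apply/allP: t; rewrite /Utypes. Qed.

Lemma Wvec_sparse_E (w : nat -> R) :
  Wvec n w -> sparse (fun p : 'I_(2 * n) => w p).
Proof.
move=> [u [[t [tU [S [K [cardS [cardK ->]]]]]] w_def]].
have /andP [smallS smallK] := Utypes_small tU.
case: w_def => ->.
- exists (map val (enum S)); first by rewrite size_map -cardE cardS.
  by left=> p; apply: vecU_supported_E.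
- exists (map val (enum K)); first by rewrite size_map -cardE cardK.
  by right=> p; rewrite piv_E //; apply: vecU_supported_calE.
Qed.

Lemma Wvec_sparse_calE (w : nat -> R) :
  Wvec n w -> sparse (fun p : 'I_(2 * n) => w (2 * n + p)%N).
Proof.
move=> [u [[t [tU [S [K [cardS [cardK ->]]]]]] w_def]].
have /andP [smallS smallK] := Utypes_small tU.
case: w_def => ->.
- exists (map val (enum K)); first by rewrite size_map -cardE cardK.
  by left=> p; apply: vecU_supported_calE.
- exists (map val (enum S)); first by rewrite size_map -cardE cardS.
  right=> p; rewrite piv_calE; apply: vecU_supported_E.
  by rewrite ltn_pmod // (leq_ltn_trans _ (ltn_ord p)).
Qed.

Lemma W_E_vanishes_at_admissible : vanishes_at_admissible (@W_E R n).
Proof. by move=> T k [w [Ww ->]]; apply: sparse_prod_eq0 (Wvec_sparse_E Ww). Qed.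

Lemma W_calE_vanishes_at_admissible : vanishes_at_admissible (@W_calE R n).
Proof.
by move=> T k [w [Ww ->]]; apply: sparse_prod_eq0 (Wvec_sparse_calE Ww).
Qed.

End Generators.

Lemma pair_index_double (m : nat) : pair_index (2 * m) = m.
Proof. by rewrite /pair_index; lia. Qed.

Lemma shifted_pair_index_double (n m : nat) :
  (m < n)%N -> shifted_pair_index n (2 * m) = m.
Proof. by move=> m_lt; rewrite /shifted_pair_index modn_small; lia. Qed.

Lemma inj_from_lift (d : nat) (f : 'I_d.+1 -> nat) (i : 'I_d.+1) :
  injective (fun j => f (lift i j)) -> (forall j, f (lift i j) != f i) ->
  injective f.
Proof.
move=> inj_f f_ne i1 i2.
case: (unliftP i i1) => [j1 ->|->]; case: (unliftP i i2) => [j2 ->|->] // eq_f.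
- by rewrite (inj_f _ _ eq_f).
- by move: (f_ne j1); rewrite eq_f eqxx.
- by move: (f_ne j2); rewrite eq_f eqxx.
Qed.

Section OnesModulo.
Variables (R : realType) (n d : nat).

Lemma in_span_eq0 (P : mtensor R d (2 * n) -> Prop) (M : mtensor R d (2 * n)) k :
  (forall S, P S -> S k = 0) -> in_span P M -> M k = 0.
Proof.
move=> P0 [N [f [c [Pf ->]]]]; rewrite big1 // => i _.
by rewrite P0 ?mulr0.
Qed.

Lemma mod_ones_eq1_admissible (P : mtensor R d (2 * n) -> Prop) T :
  vanishes_at_admissible P ->
  mod_set (@ones R d.+1 (2 * n)) P T ->
  forall k : {ffun 'I_d.+1 -> 'I_(2 * n)}, admissible k -> T k = 1.
Proof.
move=> P0 [M [M_span T_eq]] k [inj_pair inj_shift].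
rewrite T_eq big1 ?addr0 // => j _.
apply: in_span_eq0 (M_span j (k j)) => S PS; apply: P0 PS _.
by split=> i1 i2; rewrite !ffunE => eq12; apply: (@lift_inj _ j);
  [exact: inj_pair eq12 | exact: inj_shift eq12].
Qed.

Section ConstantFactors.
Hypothesis n_large : (d.+2 <= n)%N.
Variable v : 'I_d.+1 -> 'I_(2 * n) -> R.
Hypothesis v_admissible : forall k : {ffun 'I_d.+1 -> 'I_(2 * n)},
  admissible k -> \prod_(i < d.+1) v i (k i) = 1.

Lemma even_pos_subproof (m : 'I_d.+2) : (2 * m < 2 * n)%N.
Proof. by have := ltn_ord m; lia. Qed.

Definition even_pos (m : 'I_d.+2) : 'I_(2 * n) := Ordinal (even_pos_subproof m).

Lemma pair_index_even_pos (m : 'I_d.+2) : pair_index (even_pos m) = m.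
Proof. exact: pair_index_double. Qed.

Lemma shifted_pair_index_even_pos (m : 'I_d.+2) :
  shifted_pair_index n (even_pos m) = m.
Proof. by rewrite shifted_pair_index_double //; have := ltn_ord m; lia. Qed.

Definition skip2 (x y : nat) (j : 'I_d) : 'I_d.+2 :=
  inord (bump (maxn x y) (bump (minn x y) j)).

Lemma val_skip2 x y j : skip2 x y j = bump (maxn x y) (bump (minn x y) j) :> nat.
Proof.
by rewrite inordK // /bump; have := ltn_ord j; case: leqP; case: leqP; lia.
Qed.

Lemma skip2_notin x y j : (skip2 x y j : nat) \notin [:: x; y].
Proof. by rewrite val_skip2 !inE /bump; case: leqP; case: leqP; lia. Qed.

Lemma skip2_inj x y : injective (fun j => skip2 x y j : nat).
Proof.
move=> j1 j2; rewrite !val_skip2 => /(can_inj (@bumpK _)) /(can_inj (@bumpK _)).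
exact: val_inj.
Qed.

Definition fill (i : 'I_d.+1) (x y : nat) (z : 'I_(2 * n)) :
  {ffun 'I_d.+1 -> 'I_(2 * n)} :=
  [ffun i' => if unlift i i' is Some j then even_pos (skip2 x y j) else z].

Lemma admissible_fill i x y (z : 'I_(2 * n)) :
  pair_index z \in [:: x; y] -> shifted_pair_index n z \in [:: x; y] ->
  admissible (fill i x y z).
Proof.
move=> z_pair z_shift.
have fill_i : fill i x y z i = z by rewrite ffunE unlift_none.
have fill_lift j : fill i x y z (lift i j) = even_pos (skip2 x y j).
  by rewrite ffunE liftK.
split; apply: (inj_from_lift (i := i)) => [j1 j2|j] /=;
  rewrite ?fill_i !fill_lift ?pair_index_even_pos ?shifted_pair_index_even_pos;
  by [apply: skip2_inj | apply: contraNneq (skip2_notin x y j) => ->].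
Qed.

Lemma factor_eq_on_labels i x y (p q : 'I_(2 * n)) :
  pair_index p \in [:: x; y] -> shifted_pair_index n p \in [:: x; y] ->
  pair_index q \in [:: x; y] -> shifted_pair_index n q \in [:: x; y] ->
  v i p = v i q.
Proof.
move=> p_pair p_shift q_pair q_shift.
pose X := \prod_(j < d) v (lift i j) (even_pos (skip2 x y j)).
have prod_fill z : \prod_(k < d.+1) v k (fill i x y z k) = v i z * X.
  rewrite (bigD1_ord i) //= ffunE unlift_none; congr (_ * _).
  by apply: eq_bigr => j _; rewrite ffunE liftK.
have vp := v_admissible (admissible_fill i p_pair p_shift).
have vq := v_admissible (admissible_fill i q_pair q_shift).
rewrite prod_fill in vp; rewrite prod_fill in vq.
have X_neq0 : X != 0.
  by apply: contra_eq_neq vp => ->; rewrite mulr0 eq_sym oner_neq0.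
by apply: (mulIf X_neq0); rewrite vp vq.
Qed.

Lemma factor_const i (p : 'I_(2 * n)) : v i p = v i (even_pos ord0).
Proof.
have half_lt : (2 * p./2 < 2 * n)%N by have := ltn_ord p; lia.
pose e : 'I_(2 * n) := Ordinal half_lt.
have e_pair : pair_index e = pair_index p by exact: pair_index_double.
have e_shift : shifted_pair_index n e = pair_index p.
  by rewrite shifted_pair_index_double // /pair_index; have := ltn_ord p; lia.
transitivity (v i e).
  apply: (factor_eq_on_labels i (x := pair_index p) (y := shifted_pair_index n p));
  by rewrite ?e_pair ?e_shift !inE eqxx ?orbT.
apply: (factor_eq_on_labels i (x := pair_index p) (y := 0));
  rewrite ?e_pair ?e_shift ?pair_index_even_pos ?shifted_pair_index_even_pos;
  by rewrite !inE eqxx ?orbT.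
Qed.

Lemma prod_factors_eq1 (k : 'I_d.+1 -> 'I_(2 * n)) :
  \prod_(i < d.+1) v i (k i) = 1.
Proof.
pose k0 : {ffun 'I_d.+1 -> 'I_(2 * n)} :=
  [ffun i => even_pos (widen_ord (leqnSn _) i)].
have k0_admissible : admissible k0.
  split=> i1 i2; rewrite !ffunE ?pair_index_even_pos ?shifted_pair_index_even_pos;
  by move=> /= /val_inj.
rewrite -[RHS](v_admissible k0_admissible); apply: eq_bigr => i _.
by rewrite [LHS]factor_const [RHS]factor_const.
Qed.

End ConstantFactors.

Lemma decomposable_mod_ones_eq (P : mtensor R d (2 * n) -> Prop) T :
  (d.+2 <= n)%N ->
  vanishes_at_admissible P ->
  mod_set (@ones R d.+1 (2 * n)) P T -> decomposable T ->
  T = @ones R d.+1 (2 * n).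
Proof.
move=> n_large P0 T_mod [v T_v]; apply: boolp.funext => k.
rewrite T_v /ones; apply: (prod_factors_eq1 (v := v) n_large) => k' k'_admissible.
by rewrite -T_v; apply: mod_ones_eq1_admissible P0 T_mod k' k'_admissible.
Qed.

End OnesModulo.

Theorem proposition5p4 (R : realType) (n : nat) (hn : (7 <= n)%N) :
  (forall T : mtensor R 6 (2 * n)%N,
     mod_set (@ones R 6 (2 * n)%N) (@W_E R n) T -> decomposable T ->
     T = @ones R 6 (2 * n)%N) /\
  (forall T : mtensor R 6 (2 * n)%N,
     mod_set (@ones R 6 (2 * n)%N) (@W_calE R n) T -> decomposable T ->
     T = @ones R 6 (2 * n)%N).
Proof.
split=> T; apply: decomposable_mod_ones_eq hn _.
- exact: W_E_vanishes_at_admissible.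
- exact: W_calE_vanishes_at_admissible.
Qed.
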